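(* Let $1 \le a \le b$ be integers and let $G$ be a graph. If $G$ has an $[a,b]$-labelling, then $G$ has an $[a,b]$-labelling in which every edge label is at most $2a$.
   Context: For a graph $G$ and integers $1 \le a \le b$, an $[a,b]$-labelling of $G$ is an assignment of a nonnegative integer label to each edge of $G$ such that (i) for every vertex $v$, the sum of the labels of the edges incident to $v$ is even and lies in $[2a,2b]$, and (ii) the subgraph consisting of all vertices of $G$ and the edges with nonzero label is connected. (A graph has an $[a,b]$-labelling iff it has a closed walk visiting every vertex at least $a$ and at most $b$ times, the label of an edge being the number of traversals.) *)

From mathcomp Require Import all_boot.
Set Implicit Arguments. Unset Strict Implicit. Unset Printing Implicit Defensive.

Definition simple_graph (T : finType) (g : rel T) : Prop :=
  symmetric g /\ irreflexive g.

(* An edge labelling of g with nonnegative integers is represented as a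
   symmetric function lab : T -> T -> nat which vanishes on non-edges;
   lab x y is the label of the edge xy. *)
Definition edge_labelling (T : finType) (g : rel T) (lab : T -> T -> nat) : Prop :=
  (forall x y, lab x y = lab y x) /\ (forall x y, ~~ g x y -> lab x y = 0).

Definition lab_deg (T : finType) (lab : T -> T -> nat) (v : T) : nat :=
  \sum_(u : T) lab v u.

Definition ab_labelling (T : finType) (g : rel T) (a b : nat)
    (lab : T -> T -> nat) : Prop :=
  edge_labelling g lab /\
  (forall v, ~~ odd (lab_deg lab v) /\ 2 * a <= lab_deg lab v <= 2 * b) /\
  (forall x y, connect (fun u w => 0 < lab u w) x y).

From mathcomp Require Import all_boot.
From mathcomp Require Import zify.
Set Implicit Arguments. Unset Strict Implicit. Unset Printing Implicit Defensive.

(* Replace every label l > 2a by the largest number at most 2a with the parity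
   of l.  Labels only decrease, so degrees stay at most 2b; parities of labels,
   hence of degrees, are kept, and positive labels stay positive, so the support
   and its connectivity are unchanged.  A degree that did not change is still at
   least 2a; otherwise it contains a label 2a - 1 or 2a, and being even it is
   again at least 2a. *)

Definition cap_label (m l : nat) : nat := if m < l then m - odd l else l.

Lemma cap_label_le m l : cap_label m l <= l.
Proof. by rewrite /cap_label; case: ifP; lia. Qed.

Lemma cap_label_le_bound m l : cap_label m l <= m.
Proof. by rewrite /cap_label; case: ifP; lia. Qed.

Lemma cap_label_ge_pred m l : m < l -> m.-1 <= cap_label m l.
Proof. by rewrite /cap_label => ->; case: (odd l); lia. Qed.

Lemma even_pred_leq m n : ~~ odd m -> ~~ odd n -> m.-1 <= n -> m <= n.
Proof.
case: m => //= m m_even n_even; rewrite leq_eqVlt => /orP[/eqP m_eq | //].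
by move: n_even m_even; rewrite -m_eq => ->.
Qed.

Lemma odd_sum_congr (T : finType) (F G : T -> nat) :
  (forall i, odd (F i) = odd (G i)) ->
  odd (\sum_(i : T) F i) = odd (\sum_(i : T) G i).
Proof.
move=> FG; apply: (big_ind2 (fun x y => odd x = odd y)) => // x1 x2 y1 y2 E1 E2.
by rewrite !oddD E1 E2.
Qed.

Section CapLabel.

Variable m : nat.
Hypotheses (m_gt0 : 0 < m) (m_even : ~~ odd m).

Lemma odd_cap_label l : odd (cap_label m l) = odd l.
Proof.
rewrite /cap_label; case: ifP => // _.
by case: (boolP (odd l)) => l_odd; rewrite ?oddB ?subn0 ?(negbTE m_even); lia.
Qed.

Lemma cap_label_gt0 l : (0 < cap_label m l) = (0 < l).
Proof.
have m_ge2 : 1 < m by case: m m_gt0 m_even => [|[]].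
by rewrite /cap_label; case: ifP => //; case: (odd l); lia.
Qed.

Variable T : finType.

Definition capped (lab : T -> T -> nat) (x y : T) : nat := cap_label m (lab x y).

Lemma odd_lab_deg_capped lab v : odd (lab_deg (capped lab) v) = odd (lab_deg lab v).
Proof. by apply: odd_sum_congr => u; apply: odd_cap_label. Qed.

Lemma lab_deg_capped_le lab v : lab_deg (capped lab) v <= lab_deg lab v.
Proof. by apply: leq_sum => u _; apply: cap_label_le. Qed.

Lemma lab_deg_capped_ge lab v :
  ~~ odd (lab_deg lab v) -> m <= lab_deg lab v -> m <= lab_deg (capped lab) v.
Proof.
move=> deg_even m_le_deg.
case: (pickP (fun u => m < lab v u)) => [u big_u | small].
  apply: even_pred_leq => //; first by rewrite odd_lab_deg_capped.
  apply: leq_trans (cap_label_ge_pred big_u) _.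
  by rewrite /lab_deg (bigD1 u) //= leq_addr.
rewrite (_ : lab_deg _ v = lab_deg lab v) // /lab_deg.
by apply: eq_bigr => u _; rewrite /capped /cap_label small.
Qed.

Lemma edge_labelling_capped g lab :
  edge_labelling g lab -> edge_labelling g (capped lab).
Proof.
move=> [lab_sym lab_nonedge]; split=> x y; first by rewrite /capped lab_sym.
by move=> /lab_nonedge; rewrite /capped => ->.
Qed.

Lemma connect_capped lab :
  connect (fun u w => 0 < capped lab u w) =2 connect (fun u w => 0 < lab u w).
Proof. by apply: eq_connect => u w; apply: cap_label_gt0. Qed.

End CapLabel.

Lemma ab_labelling_capped (T : finType) (g : rel T) a b lab :
  0 < a -> ab_labelling g a b lab -> ab_labelling g a b (capped (2 * a) lab).
Proof.
move=> a_gt0 [lab_edge [lab_deg_ok lab_conn]].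
have m_gt0 : 0 < 2 * a by rewrite muln_gt0.
have m_even : ~~ odd (2 * a) by rewrite oddM.
split; first exact: edge_labelling_capped.
split=> [v | x y]; last by rewrite connect_capped.
have [deg_even /andP[deg_ge deg_le]] := lab_deg_ok v.
rewrite odd_lab_deg_capped // lab_deg_capped_ge //.
by rewrite (leq_trans (lab_deg_capped_le _ _ _)).
Qed.

Theorem lemma3p1 (T : finType) (g : rel T) (a b : nat) :
  simple_graph g -> 1 <= a -> a <= b ->
  (exists lab, ab_labelling g a b lab) ->
  exists lab, ab_labelling g a b lab /\ (forall x y, lab x y <= 2 * a).
Proof.
move=> _ a_gt0 _ [lab lab_ok].
exists (capped (2 * a) lab); split; first exact: ab_labelling_capped.
by move=> x y; apply: cap_label_le_bound.
Qed.
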